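(* For every finite simple graph $G$ and every integer $n\ge 2$, $$\chi_i(S_G^2)\le \chi_i(S_G^n)\le \chi_i(S_G^2)+1.$$
   Context: For a graph $H$, an injective $k$-coloring is a map $f:V(H)\to\{1,\dots,k\}$ such that any two distinct vertices $u,w$ with $f(u)=f(w)$ have no common neighbor. The injective chromatic number $\chi_i(H)$ is the least $k$ for which $H$ admits an injective $k$-coloring. For a graph $G$ and a positive integer $n$, the generalized Sierpiński graph $S_G^n$ has vertex set $V(G)^n$, and two vertices $(u_1,\dots,u_n)$, $(v_1,\dots,v_n)$ are adjacent if and only if there is $d\in\{1,\dots,n\}$ such that $u_i=v_i$ for all $i<d$, $u_dv_d\in E(G)$, and $u_i=v_d$ and $v_i=u_d$ for all $i>d$. (In particular $S_G^1\cong G$.) *)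

From mathcomp Require Import all_boot.
Set Implicit Arguments. Unset Strict Implicit. Unset Printing Implicit Defensive.

(* Generalized Sierpinski graph S_G^n on V(G)^n = {ffun 'I_n -> T}
   (coordinate i : 'I_n is the (i+1)-th coordinate of the paper). *)
Definition sierp_adj (T : finType) (e : rel T) (n : nat) : rel {ffun 'I_n -> T} :=
  fun u v =>
    [exists d : 'I_n,
      [&& [forall i : 'I_n, (i < d) ==> (u i == v i)],
          e (u d) (v d) &
          [forall i : 'I_n, (d < i) ==> ((u i == v d) && (v i == u d))]]].

Arguments sierp_adj {T} e n _ _.

Definition inj_colorable (V : finType) (e : rel V) (k : nat) : bool :=
  [exists f : {ffun V -> 'I_k},
    [forall u : V, forall w : V,
       ((u != w) && (f u == f w)) ==> ~~ [exists x : V, e u x && e w x]]].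

Lemma inj_colorable_exists (V : finType) (e : rel V) : exists k, inj_colorable e k.
Proof.
exists #|V|; apply/existsP; exists [ffun x => enum_rank x].
apply/forallP => u; apply/forallP => w; rewrite !ffunE.
apply/implyP => /andP[uw /eqP fe].
by move: uw; rewrite (enum_rank_inj fe) eqxx.
Qed.

Definition inj_chi (V : finType) (e : rel V) : nat :=
  ex_minn (inj_colorable_exists e).

From mathcomp Require Import all_boot zify.
Set Implicit Arguments. Unset Strict Implicit. Unset Printing Implicit Defensive.

(* The lower bound holds because prefixing a fixed word of length n - 2 embeds
   S_G^2 into S_G^n.  For the upper bound, extend an injective colouring c of
   S_G^2 to S_G^n: a vertex whose last two coordinates agree gets one new
   colour, any other vertex w gets c (w_(n-1), w_n).  Projecting onto the last
   two coordinates maps edges through these coordinates to edges of S_G^2, and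
   a vertex has at most one neighbour through any earlier coordinate; a short
   case analysis on the coordinates of the two edges at a common neighbour
   then shows the new colouring is injective. *)

Section InjectiveColoring.
Variables (V : finType) (eV : rel V).

Lemma inj_colorableP k :
  reflect (exists f : {ffun V -> 'I_k},
             forall u w x, eV u x -> eV w x -> f u = f w -> u = w)
          (inj_colorable eV k).
Proof.
apply: (iffP existsP) => -[f f_inj]; exists f.
- move=> u w x ux wx fuw; apply/eqP/negPn/negP => uw.
  have /implyP := forallP (forallP f_inj u) w.
  rewrite uw fuw eqxx => /(_ isT)/negP; apply.
  by apply/existsP; exists x; rewrite ux.
- apply/forallP => u; apply/forallP => w; apply/implyP => /andP[uw /eqP fuw].
  apply/negP => /existsP[x /andP[ux wx]].
  by rewrite (f_inj u w x) ?eqxx in uw.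
Qed.

Lemma inj_chiP : inj_colorable eV (inj_chi eV).
Proof. by rewrite /inj_chi; case: ex_minnP. Qed.

Lemma inj_chi_min k : inj_colorable eV k -> inj_chi eV <= k.
Proof. by rewrite /inj_chi; case: ex_minnP => ? _; apply. Qed.

Lemma inj_chi_card0 : #|V| = 0 -> inj_chi eV = 0.
Proof.
move=> V0; apply/eqP; rewrite -leqn0 inj_chi_min //.
apply/inj_colorableP; exists (ffun0 V0) => u.
by have := card0_eq V0 u; rewrite !inE.
Qed.

End InjectiveColoring.

Lemma inj_chi_embedding (V W : finType) (eV : rel V) (eW : rel W) (phi : V -> W) :
  injective phi -> {homo phi : x y / eV x y >-> eW x y} -> inj_chi eV <= inj_chi eW.
Proof.
move=> phi_inj phi_hom; apply: inj_chi_min.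
have /inj_colorableP[f f_inj] := inj_chiP eW.
apply/inj_colorableP; exists [ffun x => f (phi x)] => u w x ux wx.
by rewrite !ffunE => fuw; apply/phi_inj/(f_inj _ _ (phi x)); rewrite ?phi_hom.
Qed.

Section Sierpinski.
Variables (T : finType) (e : rel T).

Definition sierp_edge n (d : 'I_n) (u v : {ffun 'I_n -> T}) : Prop :=
  [/\ forall i : 'I_n, i < d -> u i = v i, e (u d) (v d) &
      forall i : 'I_n, d < i -> u i = v d /\ v i = u d].

Lemma sierp_adjP n u v :
  reflect (exists d : 'I_n, sierp_edge d u v) (sierp_adj e n u v).
Proof.
apply: (iffP existsP) => -[d edge]; exists d.
- case/and3P: edge => /forallP below edv /forallP above.
  split=> // i lt_di; first exact/eqP/(implyP (below i)).
  by case/andP: (implyP (above i) lt_di) => /eqP-> /eqP->.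
- case: edge => below edv above; apply/and3P; split=> //.
  + by apply/forallP => i; apply/implyP => /below->.
  + by apply/forallP => i; apply/implyP => /above[-> ->]; rewrite !eqxx.
Qed.

Definition sierp_pad p n (t : T) (u : {ffun 'I_n -> T}) : {ffun 'I_(p + n) -> T} :=
  [ffun i => if split i is inr j then u j else t].

Lemma sierp_pad_rshift p n t (u : {ffun 'I_n -> T}) j :
  sierp_pad p t u (rshift p j) = u j.
Proof. by rewrite ffunE (unsplitK (inr _ j)). Qed.

Lemma sierp_pad_inj p n t : injective (@sierp_pad p n t).
Proof.
move=> u v uv; apply/ffunP => j.
by rewrite -(sierp_pad_rshift p t u) -(sierp_pad_rshift p t v) uv.
Qed.

Lemma sierp_pad_edge p n t (d : 'I_n) u v :
  sierp_edge d u v -> sierp_edge (rshift p d) (sierp_pad p t u) (sierp_pad p t v).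
Proof.
case=> below edv above; split; rewrite ?sierp_pad_rshift // => i.
- by rewrite !ffunE; case: split_ordP => // j -> /=; rewrite ltn_add2l => /below->.
- rewrite !ffunE; case: split_ordP => j -> /=.
    by rewrite ltnNge (leq_trans _ (leq_addr _ _)) // ltnW.
  by rewrite ltn_add2l => /above.
Qed.

Lemma inj_chi_sierp_pad p n : 0 < n ->
  inj_chi (sierp_adj e n) <= inj_chi (sierp_adj e (p + n)).
Proof.
move=> n_gt0; have [t _ | T0] := pickP (@predT T).
- apply: (inj_chi_embedding (@sierp_pad_inj p n t)) => u v /sierp_adjP[d uv].
  by apply/sierp_adjP; exists (rshift p d); apply: sierp_pad_edge.
- by rewrite inj_chi_card0 // card_ffun card_ord (eq_card0 T0) exp0n.
Qed.

Lemma ltn_neq_ord_max n (i : 'I_n.+1) : i != ord_max -> i < n.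
Proof.
move=> iN; rewrite ltn_neqAle -ltnS ltn_ord andbT.
by apply: contra iN => /eqP i_n; apply/eqP/val_inj.
Qed.

Lemma sierp_edge_last_uniq n (u u' z : {ffun 'I_n.+1 -> T}) :
  sierp_edge ord_max u z -> sierp_edge ord_max u' z ->
  u ord_max = u' ord_max -> u = u'.
Proof.
case=> below _ _ [below' _ _] last_eq; apply/ffunP => i.
have [lt_i | ge_i] := ltnP i n; first by rewrite below // below'.
by have -> : i = ord_max by apply/val_inj/eqP; rewrite eqn_leq ge_i -ltnS ltn_ord.
Qed.

Hypothesis e_irr : irreflexive e.

(* A vertex [z] of S_G^n has at most one neighbour through a coordinate other
   than the last one: it must be [(z_0, .., z_(d-1), z_(d+1), z_d, .., z_d)]. *)
Lemma sierp_edge_inner_uniq n (d d' : 'I_n.+1) (u u' z : {ffun 'I_n.+1 -> T}) :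
  sierp_edge d u z -> sierp_edge d' u' z ->
  d != ord_max -> d' != ord_max -> u = u'.
Proof.
wlog le_dd' : d d' u u' / d <= d'.
  move=> W ud u'd' dN d'N.
  have [le | /ltnW le] := leqP d d'; first exact: W ud u'd' _ _.
  by symmetry; apply: W u'd' ud _ _.
move=> [below edz above] [below' ed'z above'] dN d'N.
pose s : 'I_n.+1 := Ordinal (ltn_neq_ord_max d'N : d'.+1 < n.+1).
have [_ zs] := above' s (ltnSn d').
have [lt_dd' | ge_dd'] := ltnP d d'.
  have [_ zd'] := above d' lt_dd'; have [_ zs'] := above s (ltnW lt_dd').
  by move: ed'z; rewrite -zs zs' -zd' e_irr.
have eq_d'd : d' = d by apply/val_inj/eqP; rewrite eqn_leq ge_dd' le_dd'.
subst d'.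
apply/ffunP => i; have [lt_id | lt_di | /val_inj ->] := ltngtP i d.
- by rewrite below // below'.
- by have [-> _] := above i lt_di; have [-> _] := above' i lt_di.
- by have [_ <-] := above s (ltnSn d).
Qed.

Section Lift.
Variables (m k : nat) (c : {ffun {ffun 'I_2 -> T} -> 'I_k}).
Hypothesis c_inj : forall x y z,
  sierp_adj e 2 x z -> sierp_adj e 2 y z -> c x = c y -> x = y.

Let a : 'I_m.+2 := inord m.
Let b : 'I_m.+2 := ord_max.

Let val_a : a = m :> nat.
Proof. by rewrite /a inordK. Qed.

Lemma ord_last2_cases (d : 'I_m.+2) : [\/ d = a, d = b | d < m].
Proof.
have : d < m \/ d = m :> nat \/ d = m.+1 :> nat by have := ltn_ord d; lia.
case=> [lt_dm | [d_m | d_Sm]]; [constructor 3 | constructor 1 | constructor 2] => //.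
- by apply: ord_inj; rewrite val_a.
- exact: ord_inj.
Qed.

Definition sierp_tail (w : {ffun 'I_m.+2 -> T}) : {ffun 'I_2 -> T} :=
  [ffun i => w (if i == ord0 then a else b)].

Lemma sierp_tail_eq u u' : sierp_tail u = sierp_tail u' -> u a = u' a /\ u b = u' b.
Proof.
move=> tail_eq; have := congr1 (fun w : {ffun 'I_2 -> T} => w ord0) tail_eq.
by have := congr1 (fun w : {ffun 'I_2 -> T} => w ord_max) tail_eq; rewrite !ffunE.
Qed.

Lemma sierp_edge_tail_const d u z : sierp_edge d u z -> d < m -> u a = u b /\ z a = z b.
Proof.
case=> _ _ above lt_dm.
have [-> ->] : u a = z d /\ z a = u d by apply: above; rewrite val_a.
by have [-> ->] : u b = z d /\ z b = u d by apply: above; apply: ltn_trans lt_dm _.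
Qed.

Lemma sierp_tail_edge d u z :
  sierp_edge d u z -> m <= d -> sierp_adj e 2 (sierp_tail u) (sierp_tail z).
Proof.
move=> uz ge_dm; apply/sierp_adjP.
case: (ord_last2_cases d) uz => [-> | -> | lt_dm]; last by rewrite ltnNge ge_dm in lt_dm.
- case=> _ edz above; exists ord0; split; rewrite ?ffunE // => -[[|[|i]] lt_i] //= _.
  by rewrite !ffunE /=; apply: above; rewrite val_a.
- case=> below edz _; exists ord_max; split; rewrite ?ffunE // => -[[|[|i]] lt_i] //= _.
  by rewrite !ffunE; apply: below; rewrite val_a.
Qed.

Definition lift_color (w : {ffun 'I_m.+2 -> T}) : 'I_k.+1 :=
  if w a == w b then ord_max else widen_ord (leqnSn k) (c (sierp_tail w)).

Lemma lift_color_eq u u' : lift_color u = lift_color u' ->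
  (u a == u b) = (u' a == u' b) /\ (u a != u b -> c (sierp_tail u) = c (sierp_tail u')).
Proof.
rewrite /lift_color; case: eqP => _; case: eqP => _ // /(congr1 val) /=.
- by move=> k_eq; have := ltn_ord (c (sierp_tail u')); rewrite -k_eq ltnn.
- by move=> k_eq; have := ltn_ord (c (sierp_tail u)); rewrite k_eq ltnn.
- by move/val_inj.
Qed.

Lemma lift_color_inj u u' z : sierp_adj e m.+2 u z -> sierp_adj e m.+2 u' z ->
  lift_color u = lift_color u' -> u = u'.
Proof.
move=> /sierp_adjP[d uz] /sierp_adjP[d' u'z] same; apply/eqP/negPn/negP => neq.
(* By [sierp_edge_inner_uniq], one of the two edges at [z] goes through the
   last coordinate. *)
wlog d'b : d d' u u' uz u'z same neq / d' = b.
  move=> W; have [d'b | d'N] := eqVneq d' b; first exact: W uz u'z same neq d'b.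
  have [db | dN] := eqVneq d b; first by apply: W u'z uz _ _ db; rewrite // eq_sym.
  by rewrite (sierp_edge_inner_uniq uz u'z) ?eqxx in neq.
subst d'; have [below' e'b _] := u'z.
have u'a : u' a = z a by apply: below'; rewrite val_a.
have [tc_eq c_eq] := lift_color_eq same.
have tail_eq : u a != u b -> m <= d -> sierp_tail u = sierp_tail u'.
  move=> ncu ge_dm; apply: c_inj (c_eq ncu).
  - exact: sierp_tail_edge uz ge_dm.
  - exact: sierp_tail_edge u'z (leqnSn m).
case: (ord_last2_cases d) => [da | db | lt_dm]; [subst d.. |].
- have [_ eua above] := uz.
  have [ub _] : u b = z a /\ z b = u a by apply: above; rewrite val_a.
  have ncu : u a != u b by rewrite ub; apply: contraTneq eua => ->; rewrite e_irr.
  have [ua _] := sierp_tail_eq (tail_eq ncu (eq_leq (esym val_a))).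
  by move: eua; rewrite ua u'a e_irr.
- have ne_ub : u b != u' b.
    by apply: contra neq => /eqP ub; apply/eqP; apply: sierp_edge_last_uniq uz u'z ub.
  have [below _ _] := uz; have ua : u a = z a by apply: below; rewrite val_a.
  have [tcu | ncu] := eqVneq (u a) (u b).
    have /eqP tcu' : u' a == u' b by rewrite -tc_eq tcu.
    by move: ne_ub; rewrite -tcu ua -u'a tcu' eqxx.
  have [_ ub] := sierp_tail_eq (tail_eq ncu (leqnSn m)).
  by rewrite ub eqxx in ne_ub.
- have [tcu tcz] := sierp_edge_tail_const uz lt_dm.
  have /eqP tcu' : u' a == u' b by rewrite -tc_eq tcu.
  by move: e'b; rewrite -tcu' u'a tcz e_irr.
Qed.

End Lift.

Lemma inj_colorable_sierp_lift m k :
  inj_colorable (sierp_adj e 2) k -> inj_colorable (sierp_adj e m.+2) k.+1.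
Proof.
case/inj_colorableP => c c_inj; apply/inj_colorableP.
exists [ffun w => lift_color c w] => u u' z uz u'z; rewrite !ffunE.
exact: (lift_color_inj c_inj uz u'z).
Qed.

End Sierpinski.

Theorem mainTheorem1 (T : finType) (e : rel T) (n : nat) :
  symmetric e -> irreflexive e -> 2 <= n ->
  inj_chi (sierp_adj e 2) <= inj_chi (sierp_adj e n) <= (inj_chi (sierp_adj e 2)).+1.
Proof.
move=> _ e_irr; case: n => [|[|m]] // _; apply/andP; split.
- by rewrite -(addn2 m) inj_chi_sierp_pad.
- exact/inj_chi_min/inj_colorable_sierp_lift/inj_chiP.
Qed.
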